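(* Let $k\ge1$, $n_0>1$, and let $A_0,\dots,A_{k-1}$ belong to the Bloch space $\mathfrak B$, not all identically zero. Suppose there is $\nu\in[0,1)$ such that for every $\theta\in[0,2\pi)$ the point $z_\theta=\nu e^{i\theta}$ satisfies $A_j(z_\theta)\ne0$ for some $j\in\{0,\dots,k-1\}$. Then every solution $f$ in $\mathbb D$ of $$(f^{(k)})^{n_0}+A_{k-1}(z)(f^{(k-1)})^{n_0}+\cdots+A_1(z)(f')^{n_0}+A_0(z)f^{n_0}=0$$ belongs to $\bigcap_{0<s<\infty}\mathfrak B^s$.
   Context: $\mathbb D$ is the open unit disk. For $s>0$, the Bloch-type space $\mathfrak B^s$ consists of analytic $g$ on $\mathbb D$ with $|g(0)|+\sup_{z\in\mathbb D}|g'(z)|(1-|z|^2)^s<\infty$; the Bloch space is $\mathfrak B=\mathfrak B^1$. A solution is an analytic function on $\mathbb D$ satisfying the equation, where the real powers $(f^{(j)})^{n_0}$ are understood via some choice of branches, so that $|(f^{(j)})^{n_0}|=|f^{(j)}|^{n_0}$. *)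

From Stdlib Require Import Reals Lra.
Open Scope R_scope.

Definition Cplx : Type := (R * R)%type.
Definition C0 : Cplx := (0, 0).
Definition RtoC (x : R) : Cplx := (x, 0).
Definition Cadd (z w : Cplx) : Cplx := (fst z + fst w, snd z + snd w).
Definition Copp (z : Cplx) : Cplx := (- fst z, - snd z).
Definition Csub (z w : Cplx) : Cplx := Cadd z (Copp w).
Definition Cmul (z w : Cplx) : Cplx :=
  (fst z * fst w - snd z * snd w, fst z * snd w + snd z * fst w).
Definition Cmod (z : Cplx) : R := sqrt (fst z ^ 2 + snd z ^ 2).
Definition Cexp (z : Cplx) : Cplx := (exp (fst z) * cos (snd z), exp (fst z) * sin (snd z)).
Definition polar (r theta : R) : Cplx := (r * cos theta, r * sin theta).

Definition inD (z : Cplx) : Prop := Cmod z < 1.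

Definition has_cderiv (f : Cplx -> Cplx) (z l : Cplx) : Prop :=
  forall eps : R, 0 < eps -> exists delta : R, 0 < delta /\
    forall h : Cplx, h <> C0 -> Cmod h < delta ->
      Cmod (Csub (Csub (f (Cadd z h)) (f z)) (Cmul l h)) <= eps * Cmod h.

Definition analytic_D (f : Cplx -> Cplx) : Prop :=
  forall z, inD z -> exists l, has_cderiv f z l.

(* Bloch-type space B^s: analytic g with sup_{z in D} |g'(z)| (1-|z|^2)^s < oo
   (|g(0)| is automatically finite). *)
Definition bloch_type (s : R) (g : Cplx -> Cplx) : Prop :=
  exists g' : Cplx -> Cplx,
    (forall z, inD z -> has_cderiv g z (g' z)) /\
    exists M : R, forall z, inD z ->
      Cmod (g' z) * Rpower (1 - Cmod z ^ 2) s <= M.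

Definition bloch (g : Cplx -> Cplx) : Prop := bloch_type 1 g.

(* p is a value of the real power w^a for some choice of branch of log w
   (with 0^a = 0); every such value satisfies |p| = |w|^a. *)
Definition is_rpow (a : R) (w p : Cplx) : Prop :=
  (w = C0 /\ p = C0) \/
  (w <> C0 /\ exists L : Cplx, Cexp L = w /\ p = Cexp (Cmul (RtoC a) L)).

Fixpoint Csum (k : nat) (u : nat -> Cplx) : Cplx :=
  match k with
  | O => C0
  | S k' => Cadd (Csum k' u) (u k')
  end.

(* The Bloch coefficients grow at most like log 1/(1 - |z|).  At each point the equation
   bounds |f^(k)| by (1 + k max_j |A_j|) max_{j<k} |f^(j)|, so along every ray
   Q = sum_{j<k} |f^(j)|^2 satisfies Q' <= c(t) Q with c(t) = O(log 1/(1 - t)).  Since c is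
   integrable on [0, 1), Gronwall's inequality bounds Q on the whole disk; hence
   |f'(z)| = O(log 1/(1 - |z|)), and log 1/(1 - r) (1 - r^2)^s is bounded for every s > 0. *)

From Stdlib Require Import Reals Lra Psatz.
From Coquelicot Require Import Rcomplements Hierarchy Derive AutoDerive.
Open Scope R_scope.

Lemma exp_le_exp x y : x <= y -> exp x <= exp y.
Proof. intros [hlt| ->]; [now left; apply exp_increasing | lra]. Qed.

Lemma Cmod_ge0 z : 0 <= Cmod z.
Proof. apply sqrt_pos. Qed.

Lemma Cmod_sqr z : Cmod z ^ 2 = fst z ^ 2 + snd z ^ 2.
Proof. apply pow2_sqrt; nra. Qed.

Lemma Cmod_C0 : Cmod C0 = 0.
Proof. unfold Cmod, C0; simpl; replace (0 * _ + _) with 0 by ring; apply sqrt_0. Qed.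

Lemma Cmod_eq0 z : Cmod z = 0 -> z = C0.
Proof.
  intros h; pose proof (Cmod_sqr z) as e; rewrite h in e.
  destruct z as [x y]; simpl in e; unfold C0; f_equal; nra.
Qed.

Definition Cdot (z w : Cplx) : R := fst z * fst w + snd z * snd w.

Lemma Cdot_le_Cmod z w : Cdot z w <= Cmod z * Cmod w.
Proof.
  pose proof (Cmod_ge0 z); pose proof (Cmod_ge0 w).
  destruct (Rle_or_lt (Cdot z w) 0); [nra|].
  apply Rsqr_incr_0_var; [rewrite !Rsqr_pow2 | nra].
  rewrite Rpow_mult_distr, !Cmod_sqr; unfold Cdot.
  replace ((fst z ^ 2 + snd z ^ 2) * (fst w ^ 2 + snd w ^ 2)) with
    ((fst z * fst w + snd z * snd w) ^ 2 + (fst z * snd w - snd z * fst w) ^ 2) by ring.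
  pose proof (pow2_ge_0 (fst z * snd w - snd z * fst w)); lra.
Qed.

Lemma Cmod_triangle z w : Cmod (Cadd z w) <= Cmod z + Cmod w.
Proof.
  pose proof (Cmod_ge0 z); pose proof (Cmod_ge0 w).
  apply Rsqr_incr_0_var; [rewrite !Rsqr_pow2 | lra].
  pose proof (Cdot_le_Cmod z w); pose proof (Cmod_sqr z); pose proof (Cmod_sqr w).
  rewrite Cmod_sqr; unfold Cdot, Cadd in *; simpl; nra.
Qed.

Lemma Cmod_le_add_Csub z w : Cmod z <= Cmod w + Cmod (Csub z w).
Proof.
  replace z with (Cadd w (Csub z w)) at 1 by
    (unfold Csub, Cadd, Copp; cbn [fst snd]; destruct z; f_equal; cbn [fst snd]; ring).
  apply Cmod_triangle.
Qed.

Lemma Cmod_Cmul z w : Cmod (Cmul z w) = Cmod z * Cmod w.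
Proof.
  unfold Cmod, Cmul; rewrite <- sqrt_mult_alt by nra; f_equal; cbn [fst snd]; ring.
Qed.

Lemma Cmod_Cexp z : Cmod (Cexp z) = exp (fst z).
Proof.
  unfold Cmod, Cexp; cbn [fst snd].
  replace (_ ^ 2 + _ ^ 2) with (exp (fst z) ^ 2 * (sin (snd z) ^ 2 + cos (snd z) ^ 2)) by ring.
  rewrite <- !Rsqr_pow2, sin2_cos2, Rmult_1_r, Rsqr_pow2.
  apply sqrt_pow2; left; apply exp_pos.
Qed.

Lemma Cmod_eq_of_Cadd_eq0 z w : Cadd z w = C0 -> Cmod z = Cmod w.
Proof.
  intros h; pose proof (f_equal fst h); pose proof (f_equal snd h).
  unfold Cmod; simpl in *; f_equal; nra.
Qed.

Lemma Cmod_Csum_le n (u : nat -> Cplx) B :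
  (forall j, (j < n)%nat -> Cmod (u j) <= B) -> Cmod (Csum n u) <= INR n * B.
Proof.
  induction n as [|n IH]; intros hu; simpl Csum.
  - rewrite Cmod_C0; simpl; lra.
  - rewrite S_INR.
    assert (Cmod (Csum n u) <= INR n * B) by (apply IH; intros; apply hu; lia).
    assert (Cmod (u n) <= B) by (apply hu; lia).
    pose proof (Cmod_triangle (Csum n u) (u n)); lra.
Qed.

Lemma is_rpow_Cmod a w p : w <> C0 -> is_rpow a w p -> Cmod p = Rpower (Cmod w) a.
Proof.
  intros hw [[e _]|[_ [L [<- ->]]]]; [contradiction|].
  rewrite !Cmod_Cexp; unfold Rpower, Cmul, RtoC; rewrite ln_exp; cbn [fst snd]; f_equal; ring.
Qed.

Lemma is_rpow_Cmod_le a w p X : 1 <= a -> 0 < X -> Cmod w <= X -> is_rpow a w p ->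
  Cmod p <= Cmod w * Rpower X (a - 1).
Proof.
  intros ha hX hwX hp.
  destruct (Cmod_ge0 w) as [hw|hw].
  - assert (w <> C0) by (intros ->; rewrite Cmod_C0 in hw; lra).
    rewrite (is_rpow_Cmod a w p) by easy.
    replace a with (1 + (a - 1)) at 1 by ring.
    rewrite Rpower_plus, Rpower_1 by easy.
    apply Rmult_le_compat_l; [lra|].
    apply Rle_Rpower_l; lra.
  - assert (w = C0) by (now apply Cmod_eq0).
    destruct hp as [[_ ->]|[? _]]; [|contradiction].
    rewrite Cmod_C0, <- hw, Rmult_0_l; lra.
Qed.

(* Dividing the equation by [X ^ (n0 - 1)], where [X = |x k|], makes it linear in the
   lower terms; this is where [1 <= n0] is used. *)
Lemma rpow_equation_top_le n0 k (c x P : nat -> Cplx) a m :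
  1 <= n0 -> 0 <= a -> 0 <= m ->
  (forall j, (j <= k)%nat -> is_rpow n0 (x j) (P j)) ->
  Cadd (P k) (Csum k (fun j => Cmul (c j) (P j))) = C0 ->
  (forall j, (j < k)%nat -> Cmod (c j) <= a) ->
  (forall j, (j < k)%nat -> Cmod (x j) <= m) ->
  Cmod (x k) <= (1 + INR k * a) * m.
Proof.
  intros hn0 ha hm hP hE hc hx.
  assert (0 <= INR k * a * m)
    by (apply Rmult_le_pos; [apply Rmult_le_pos, ha; apply pos_INR | easy]).
  set (X := Cmod (x k)).
  destruct (Rle_or_lt X m) as [hXm|hmX]; [lra|].
  assert (hX : 0 < X) by lra.
  set (Y := Rpower X (n0 - 1)).
  assert (hY : 0 < Y) by apply exp_pos.
  assert (htop : Cmod (P k) = X * Y).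
  { rewrite (is_rpow_Cmod n0 (x k)); [|intros e; unfold X in hX; rewrite e, Cmod_C0 in hX; lra
                                      | now apply hP].
    fold X; unfold Y; replace n0 with (1 + (n0 - 1)) at 1 by ring.
    now rewrite Rpower_plus, Rpower_1. }
  assert (hsum : Cmod (Csum k (fun j => Cmul (c j) (P j))) <= INR k * (a * (m * Y))).
  { apply Cmod_Csum_le; intros j hj; rewrite Cmod_Cmul.
    apply Rmult_le_compat; try apply Cmod_ge0; [now apply hc|].
    pose proof (hx j hj).
    apply Rle_trans with (Cmod (x j) * Y).
    - apply (is_rpow_Cmod_le n0); try lra; apply hP; lia.
    - apply Rmult_le_compat_r; lra. }
  rewrite <- (Cmod_eq_of_Cadd_eq0 _ _ hE), htop in hsum.
  assert (X <= INR k * a * m); [|lra].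
  apply Rmult_le_reg_r with Y; [easy|].
  replace (INR k * a * m * Y) with (INR k * (a * (m * Y))) by ring; lra.
Qed.

Lemma Rabs_fst_le_Cmod z : Rabs (fst z) <= Cmod z.
Proof. rewrite <- sqrt_Rsqr_abs; apply sqrt_le_1_alt; unfold Rsqr; nra. Qed.

Lemma Rabs_snd_le_Cmod z : Rabs (snd z) <= Cmod z.
Proof. rewrite <- sqrt_Rsqr_abs; apply sqrt_le_1_alt; unfold Rsqr; nra. Qed.

Lemma Cmod_normalize z : Cmod z <> 0 -> Cmod (fst z / Cmod z, snd z / Cmod z) = 1.
Proof.
  intros hz; unfold Cmod at 1; cbn [fst snd].
  replace ((fst z / Cmod z) ^ 2 + (snd z / Cmod z) ^ 2)
    with ((fst z ^ 2 + snd z ^ 2) / Cmod z ^ 2) by (field; easy).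
  rewrite <- Cmod_sqr, Rdiv_diag by (apply pow_nonzero; easy); apply sqrt_1.
Qed.

Lemma Cmod_as_Cdot z : exists e, Cmod e <= 1 /\ Cdot e z = Cmod z.
Proof.
  destruct (Req_dec (Cmod z) 0) as [h0|hz].
  - exists C0; rewrite Cmod_C0, h0; unfold Cdot, C0; cbn [fst snd]; split; [lra | ring].
  - pose proof (Cmod_sqr z) as hsq.
    exists (fst z / Cmod z, snd z / Cmod z); split; [rewrite Cmod_normalize; lra|].
    unfold Cdot; cbn [fst snd].
    replace (fst z / Cmod z * fst z + snd z / Cmod z * snd z)
      with ((fst z ^ 2 + snd z ^ 2) / Cmod z) by (field; easy).
    rewrite <- hsq; field; easy.
Qed.

Definition ray (w : Cplx) (t : R) : Cplx := (t * fst w, t * snd w).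

Lemma ray_0 w : ray w 0 = C0.
Proof. unfold ray, C0; f_equal; ring. Qed.

Lemma Cmod_ray w t : Cmod w = 1 -> Cmod (ray w t) = Rabs t.
Proof.
  intros hw; unfold ray, Cmod at 1; cbn [fst snd].
  replace ((t * fst w) ^ 2 + (t * snd w) ^ 2) with (Rsqr t * Cmod w ^ 2)
    by (rewrite Cmod_sqr; unfold Rsqr; ring).
  rewrite hw, pow1, Rmult_1_r; apply sqrt_Rsqr_abs.
Qed.

Lemma inD_ray w t : Cmod w = 1 -> 0 <= t < 1 -> inD (ray w t).
Proof. intros hw ht; unfold inD; rewrite Cmod_ray, Rabs_pos_eq; lra. Qed.

Lemma ray_Cmod z : exists w, Cmod w = 1 /\ z = ray w (Cmod z).
Proof.
  destruct (Req_dec (Cmod z) 0) as [h0|hz].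
  - exists (1, 0); split.
    + unfold Cmod; cbn [fst snd]; replace (1 ^ 2 + 0 ^ 2) with 1 by ring; apply sqrt_1.
    + rewrite h0, ray_0; now apply Cmod_eq0.
  - exists (fst z / Cmod z, snd z / Cmod z); split.
    + now apply Cmod_normalize.
    + unfold ray; cbn [fst snd]; destruct z as [x y]; cbn [fst snd]; f_equal; field; easy.
Qed.

Definition has_rderiv (u : R -> Cplx) (t : R) (du : Cplx) : Prop :=
  derivable_pt_lim (fun s => fst (u s)) t (fst du) /\
  derivable_pt_lim (fun s => snd (u s)) t (snd du).

Lemma has_rderiv_Cdot e u du t :
  has_rderiv u t du -> derivable_pt_lim (fun s => Cdot e (u s)) t (Cdot e du).
Proof.
  intros [h1 h2]; unfold Cdot.
  apply (derivable_pt_lim_plus (fun s => fst e * fst (u s)) (fun s => snd e * snd (u s)));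
    [apply (derivable_pt_lim_scal (fun s => fst (u s)))
    |apply (derivable_pt_lim_scal (fun s => snd (u s)))]; easy.
Qed.

Lemma has_rderiv_Cmod_sqr u du t :
  has_rderiv u t du -> derivable_pt_lim (fun s => Cmod (u s) ^ 2) t (2 * Cdot (u t) du).
Proof.
  intros [h1 h2]; apply is_derive_Reals.
  apply is_derive_Reals in h1; apply is_derive_Reals in h2.
  apply (is_derive_ext (fun s => plus (fst (u s) ^ 2) (snd (u s) ^ 2)));
    [intros s; now rewrite Cmod_sqr|].
  replace (2 * Cdot (u t) du)
    with (plus (INR 2 * fst du * fst (u t) ^ 1) (INR 2 * snd du * snd (u t) ^ 1))
    by (unfold Cdot, plus; simpl; ring).
  apply (is_derive_plus (fun s => fst (u s) ^ 2) (fun s => snd (u s) ^ 2)); now apply is_derive_pow.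
Qed.

Lemma difference_quotient_lt a b l h eps : h <> 0 ->
  Rabs (a - b - h * l) <= eps / 2 * Rabs h -> 0 < eps -> Rabs ((a - b) / h - l) < eps.
Proof.
  intros hh hle heps; pose proof (Rabs_pos_lt h hh).
  replace ((a - b) / h - l) with ((a - b - h * l) / h) by (field; easy).
  unfold Rdiv; rewrite Rabs_mult, Rabs_inv.
  apply Rmult_lt_reg_r with (Rabs h); [easy|].
  rewrite Rmult_assoc, Rinv_l by lra; nra.
Qed.

Lemma has_cderiv_ray g w t l : Cmod w = 1 -> has_cderiv g (ray w t) l ->
  has_rderiv (fun s => g (ray w s)) t (Cmul l w).
Proof.
  intros hw hg.
  assert (hinc : forall eps, 0 < eps ->
    exists delta : posreal, forall h, h <> 0 -> Rabs h < delta ->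
    Cmod (Csub (Csub (g (ray w (t + h))) (g (ray w t))) (Cmul l (ray w h))) <= eps / 2 * Rabs h).
  { intros eps heps; destruct (hg (eps / 2)) as [d [hd hgd]]; [lra|].
    exists (mkposreal d hd); intros h hh hhd.
    replace (ray w (t + h)) with (Cadd (ray w t) (ray w h))
      by (unfold ray, Cadd; cbn [fst snd]; f_equal; ring).
    rewrite <- (Cmod_ray w h hw); apply hgd; [|now rewrite Cmod_ray].
    intros e; apply (Rabs_no_R0 h hh); now rewrite <- (Cmod_ray w h hw), e, Cmod_C0. }
  split; intros eps heps; destruct (hinc eps heps) as [d hd]; exists d; intros h hh hhd;
    apply difference_quotient_lt; try easy; eapply Rle_trans; try apply (hd h hh hhd);
    [eapply Rle_trans; [|apply Rabs_fst_le_Cmod] | eapply Rle_trans; [|apply Rabs_snd_le_Cmod]];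
    right; unfold Csub, Cadd, Copp, Cmul, ray; cbn [fst snd]; f_equal; ring.
Qed.

Lemma nonpos_derivative_le f df a b : a <= b ->
  (forall x, a <= x <= b -> derivable_pt_lim f x (df x)) ->
  (forall x, a <= x <= b -> df x <= 0) -> f b <= f a.
Proof.
  intros hab hd hneg.
  destruct (MVT_gen f a b df) as [c [hc e]]; rewrite Rmin_left, Rmax_right in * by lra.
  - intros x hx; apply is_derive_Reals, hd; lra.
  - intros x hx; apply derivable_continuous_pt; exists (df x); apply hd; lra.
  - specialize (hneg c hc); nra.
Qed.

(* Mean value inequality for plane curves: test against the unit vector in the
   direction of the increment. *)
Lemma Cmod_increment_le (u du : R -> Cplx) (v dv : R -> R) a b : a <= b ->
  (forall t, a <= t <= b -> has_rderiv u t (du t)) ->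
  (forall t, a <= t <= b -> derivable_pt_lim v t (dv t)) ->
  (forall t, a <= t <= b -> Cmod (du t) <= dv t) ->
  Cmod (Csub (u b) (u a)) <= v b - v a.
Proof.
  intros hab hu hv hle.
  destruct (Cmod_as_Cdot (Csub (u b) (u a))) as [e [he hed]].
  assert (Cdot e (u b) - v b <= Cdot e (u a) - v a).
  { apply (nonpos_derivative_le (fun t => Cdot e (u t) - v t) (fun t => Cdot e (du t) - dv t));
      [easy| |].
    - intros t ht; apply (derivable_pt_lim_minus (fun s => Cdot e (u s)) v);
        [apply has_rderiv_Cdot, hu | apply hv]; easy.
    - intros t ht; pose proof (Cdot_le_Cmod e (du t)); pose proof (Cmod_ge0 (du t)).
      specialize (hle t ht); nra. }
  rewrite <- hed; unfold Cdot, Csub, Cadd, Copp in *; cbn [fst snd] in *; lra.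
Qed.

Lemma gronwall_le (q dq G g : R -> R) a b : a <= b ->
  (forall t, a <= t <= b -> derivable_pt_lim q t (dq t)) ->
  (forall t, a <= t <= b -> derivable_pt_lim G t (g t)) ->
  (forall t, a <= t <= b -> dq t <= g t * q t) ->
  q b <= q a * exp (G b - G a).
Proof.
  intros hab hq hG hle.
  assert (q b * exp (- G b) <= q a * exp (- G a)).
  { apply (nonpos_derivative_le (fun t => q t * exp (- G t))
             (fun t => (dq t - g t * q t) * exp (- G t))); [easy| |].
    - intros t ht.
      replace ((dq t - g t * q t) * exp (- G t))
        with (dq t * exp (- G t) + q t * (exp (- G t) * - g t)) by ring.
      apply (derivable_pt_lim_mult q (fun s => exp (- G s))); [now apply hq|].
      apply (derivable_pt_lim_comp (fun s => - G s) exp); [|apply derivable_pt_lim_exp].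
      apply (derivable_pt_lim_opp G); now apply hG.
    - intros t ht; specialize (hle t ht); pose proof (exp_pos (- G t)); nra. }
  apply Rmult_le_reg_r with (exp (- G b)); [apply exp_pos|].
  rewrite Rmult_assoc, <- exp_plus; replace (G b - G a + - G b) with (- G a) by ring; lra.
Qed.

Definition log_weight (t : R) : R := - ln (1 - t).

Lemma log_weight_0 : log_weight 0 = 0.
Proof. unfold log_weight; rewrite Rminus_0_r, ln_1; ring. Qed.

Lemma log_weight_ge0 t : 0 <= t < 1 -> 0 <= log_weight t.
Proof.
  intros ht; unfold log_weight.
  assert (ln (1 - t) <= ln 1) by (apply ln_le; lra).
  rewrite ln_1 in *; lra.
Qed.

Lemma log_weight_derive t : t < 1 -> derivable_pt_lim log_weight t (/ (1 - t)).
Proof. intros ht; apply is_derive_Reals; unfold log_weight; auto_derive; [lra | field; lra]. Qed.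

Lemma log_weight_primitive_le t : 0 <= t < 1 -> (1 - t) * ln (1 - t) + t <= 1.
Proof. intros ht; pose proof (log_weight_ge0 t ht); unfold log_weight in *; nra. Qed.

(* With [y = s * log_weight r] one has [(1 - r) ^ s = exp (- y)], and [y * exp (- y) <= 1]. *)
Lemma log_weight_Rpower_le r s : 0 <= r < 1 -> 0 < s ->
  log_weight r * Rpower (1 - r ^ 2) s <= Rpower 2 s / s.
Proof.
  intros hr hs.
  set (y := s * log_weight r).
  assert (hy : 0 <= y) by (apply Rmult_le_pos; [lra | now apply log_weight_ge0]).
  assert (hxs : Rpower (1 - r) s = exp (- y)) by (unfold Rpower, y, log_weight; f_equal; ring).
  assert (hye : y * exp (- y) <= 1).
  { pose proof (exp_ineq1_le y); pose proof (exp_pos (- y)).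
    assert (exp y * exp (- y) = 1) by (rewrite <- exp_plus, Rplus_opp_r; apply exp_0).
    nra. }
  replace (1 - r ^ 2) with ((1 - r) * (1 + r)) by ring.
  rewrite <- Rpower_mult_distr, hxs by lra.
  assert (Rpower (1 + r) s <= Rpower 2 s) by (apply Rle_Rpower_l; lra).
  assert (0 < Rpower (1 + r) s) by apply exp_pos.
  replace (log_weight r) with (y / s) by (unfold y; field; lra).
  unfold Rdiv; apply Rmult_le_reg_r with s; [easy|].
  replace (y * / s * (exp (- y) * Rpower (1 + r) s) * s) with (y * exp (- y) * Rpower (1 + r) s)
    by (field; lra).
  replace (Rpower 2 s * / s * s) with (1 * Rpower 2 s) by (field; lra).
  apply Rmult_le_compat; try lra; apply Rmult_le_pos; [easy | left; apply exp_pos].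
Qed.

Lemma Rpower_1_minus_sqr_le r s : 0 <= r < 1 -> 0 <= s -> Rpower (1 - r ^ 2) s <= 1.
Proof.
  intros hr hs; unfold Rpower.
  assert (ln (1 - r ^ 2) <= ln 1) by (apply ln_le; nra).
  rewrite ln_1 in *; rewrite <- exp_0 at 2; apply exp_le_exp; nra.
Qed.

(* Integrate [|g'| <= M / (1 - t)] along the ray through [z]. *)
Lemma bloch_growth g : bloch g -> exists M, 0 <= M /\ forall z, inD z ->
  Cmod (g z) <= Cmod (g C0) + M * log_weight (Cmod z).
Proof.
  intros [g' [hg [M hM]]].
  set (M' := Rmax 0 M); assert (hM' : 0 <= M' /\ M <= M') by (split; [apply Rmax_l | apply Rmax_r]).
  exists M'; split; [easy|]; intros z hz.
  destruct (ray_Cmod z) as [w [hw hzw]]; set (r := Cmod z) in *.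
  assert (hr : 0 <= r < 1) by (split; [apply Cmod_ge0 | exact hz]).
  assert (Cmod (Csub (g (ray w r)) (g (ray w 0))) <= M' * log_weight r - M' * log_weight 0).
  { apply (Cmod_increment_le (fun t => g (ray w t)) (fun t => Cmul (g' (ray w t)) w)
             (fun t => M' * log_weight t) (fun t => M' * / (1 - t))); [easy | | |].
    - intros t ht; apply has_cderiv_ray, hg, inD_ray; [easy | easy | lra].
    - intros t ht; apply (derivable_pt_lim_scal log_weight), log_weight_derive; lra.
    - intros t ht; rewrite Cmod_Cmul, hw, Rmult_1_r.
      specialize (hM _ (inD_ray w t hw ltac:(lra))).
      rewrite Cmod_ray, Rabs_pos_eq, Rpower_1 in hM by nra.
      pose proof (Cmod_ge0 (g' (ray w t))).
      apply Rmult_le_reg_r with (1 - t); [lra|].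
      rewrite Rmult_assoc, Rinv_l, Rmult_1_r by lra; nra. }
  rewrite hzw, ray_0, log_weight_0 in *.
  pose proof (Cmod_le_add_Csub (g (ray w r)) (g C0)); lra.
Qed.

Lemma bloch_family_growth k (A : nat -> Cplx -> Cplx) :
  (forall j, (j < k)%nat -> bloch (A j)) ->
  exists a M, 0 <= a /\ 0 <= M /\ forall j z, (j < k)%nat -> inD z ->
    Cmod (A j z) <= a + M * log_weight (Cmod z).
Proof.
  induction k as [|k IH]; intros hA.
  - exists 0, 0; repeat split; try lra; intros; lia.
  - destruct IH as [a [M [ha [hM hk]]]]; [intros; apply hA; lia|].
    destruct (bloch_growth (A k)) as [Mk [hMk hAk]]; [apply hA; lia|].
    exists (a + Cmod (A k C0)), (M + Mk); pose proof (Cmod_ge0 (A k C0)).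
    repeat split; try lra; intros j z hj hz.
    pose proof (log_weight_ge0 (Cmod z) (conj (Cmod_ge0 z) hz)).
    destruct (Nat.eq_dec j k) as [->|hjk].
    + specialize (hAk z hz); nra.
    + specialize (hk j z ltac:(lia) hz); nra.
Qed.

Fixpoint Rsum (n : nat) (u : nat -> R) : R :=
  match n with
  | O => 0
  | S n' => Rsum n' u + u n'
  end.

Lemma Rsum_le_mul n u B : (forall j, (j < n)%nat -> u j <= B) -> Rsum n u <= INR n * B.
Proof.
  induction n as [|n IH]; intros hu; simpl Rsum; [simpl; lra|].
  rewrite S_INR; assert (u n <= B) by (apply hu; lia).
  assert (Rsum n u <= INR n * B) by (apply IH; intros; apply hu; lia); lra.
Qed.

Lemma Rsum_nonneg n u : (forall j, (j < n)%nat -> 0 <= u j) -> 0 <= Rsum n u.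
Proof.
  induction n as [|n IH]; intros hu; simpl Rsum; [lra|].
  assert (0 <= u n) by (apply hu; lia).
  assert (0 <= Rsum n u) by (apply IH; intros; apply hu; lia); lra.
Qed.

Lemma Rsum_term_le n u j : (forall i, (i < n)%nat -> 0 <= u i) -> (j < n)%nat -> u j <= Rsum n u.
Proof.
  induction n as [|n IH]; intros hu hj; [lia|]; simpl Rsum.
  assert (0 <= u n) by (apply hu; lia).
  assert (0 <= Rsum n u) by (apply Rsum_nonneg; intros; apply hu; lia).
  destruct (Nat.eq_dec j n) as [->|hjn]; [lra|].
  assert (u j <= Rsum n u) by (apply IH; [intros; apply hu | ]; lia); lra.
Qed.

Lemma derivable_pt_lim_Rsum n (u du : nat -> R -> R) t :
  (forall j, (j < n)%nat -> derivable_pt_lim (u j) t (du j t)) ->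
  derivable_pt_lim (fun s => Rsum n (fun j => u j s)) t (Rsum n (fun j => du j t)).
Proof.
  induction n as [|n IH]; intros hu; simpl Rsum; [apply derivable_pt_lim_const|].
  apply (derivable_pt_lim_plus (fun s => Rsum n (fun j => u j s)) (u n));
    [apply IH; intros; apply hu | apply hu]; lia.
Qed.

Lemma has_cderiv_eq_on_D f g z l : (forall w, inD w -> f w = g w) -> inD z ->
  has_cderiv g z l -> has_cderiv f z l.
Proof.
  intros hfg hz hg eps heps; destruct (hg eps heps) as [d [hd hgd]].
  unfold inD in *; exists (Rmin d (1 - Cmod z)); split; [apply Rmin_glb_lt; lra|].
  intros h hh hhd; pose proof (Rmin_l d (1 - Cmod z)); pose proof (Rmin_r d (1 - Cmod z)).
  assert (Cmod (Cadd z h) < 1) by (pose proof (Cmod_triangle z h); lra).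
  rewrite !hfg by easy; apply hgd; [easy | lra].
Qed.

Lemma bloch_type_of_log_growth f f' C s : 0 < s -> 0 <= C ->
  (forall z, inD z -> has_cderiv f z (f' z)) ->
  (forall z, inD z -> Cmod (f' z) <= C * (1 + log_weight (Cmod z))) ->
  bloch_type s f.
Proof.
  intros hs hC hf hf'; exists f'; split; [easy|].
  exists (C * (1 + Rpower 2 s / s)); intros z hz.
  assert (hr : 0 <= Cmod z < 1) by (split; [apply Cmod_ge0 | exact hz]).
  pose proof (log_weight_Rpower_le (Cmod z) s hr hs).
  pose proof (Rpower_1_minus_sqr_le (Cmod z) s hr (Rlt_le _ _ hs)).
  assert (0 <= Rpower (1 - Cmod z ^ 2) s) by (left; apply exp_pos).
  apply Rle_trans with (C * (1 + log_weight (Cmod z)) * Rpower (1 - Cmod z ^ 2) s).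
  - apply Rmult_le_compat_r; [easy | now apply hf'].
  - rewrite Rmult_assoc; apply Rmult_le_compat_l; [easy | lra].
Qed.

Section Solution.

Variables (k : nat) (n0 a M : R) (A F : nat -> Cplx -> Cplx).
Hypothesis hn0 : 1 <= n0.
Hypothesis ha : 0 <= a.
Hypothesis hM : 0 <= M.
Hypothesis hA : forall j z, (j < k)%nat -> inD z -> Cmod (A j z) <= a + M * log_weight (Cmod z).
Hypothesis hF : forall j z, inD z -> has_cderiv (F j) z (F (S j) z).
Hypothesis hE : forall z, inD z -> exists P : nat -> Cplx,
  (forall j, (j <= k)%nat -> is_rpow n0 (F j z) (P j)) /\
  Cadd (P k) (Csum k (fun j => Cmul (A j z) (P j))) = C0.

Definition jet_norm2 (z : Cplx) : R := Rsum k (fun j => Cmod (F j z) ^ 2).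

Definition growth_factor (t : R) : R := 1 + INR k * (a + M * log_weight t).

Lemma growth_factor_ge1 t : 0 <= t < 1 -> 1 <= growth_factor t.
Proof.
  intros ht; pose proof (log_weight_ge0 t ht); pose proof (pos_INR k).
  unfold growth_factor; assert (0 <= INR k * (a + M * log_weight t)); [|lra].
  apply Rmult_le_pos; nra.
Qed.

Lemma jet_norm2_ge0 z : 0 <= jet_norm2 z.
Proof. apply Rsum_nonneg; intros; apply pow2_ge_0. Qed.

Lemma Cmod_le_sqrt_jet_norm2 j z : (j < k)%nat -> Cmod (F j z) <= sqrt (jet_norm2 z).
Proof.
  intros hj; rewrite <- (sqrt_pow2 (Cmod (F j z))) by apply Cmod_ge0.
  apply sqrt_le_1_alt, (Rsum_term_le k (fun j => Cmod (F j z) ^ 2)); [|easy].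
  intros; apply pow2_ge_0.
Qed.

Lemma Cmod_deriv_le_jet_norm2 j z : (j < k)%nat -> inD z ->
  Cmod (F (S j) z) <= growth_factor (Cmod z) * sqrt (jet_norm2 z).
Proof.
  intros hj hz; assert (hr : 0 <= Cmod z < 1) by (split; [apply Cmod_ge0 | exact hz]).
  pose proof (sqrt_pos (jet_norm2 z)).
  destruct (Nat.eq_dec (S j) k) as [->|hjk].
  - destruct (hE z hz) as [P [hP hPE]]; unfold growth_factor.
    apply (rpow_equation_top_le n0 k (fun i => A i z) (fun i => F i z) P); try easy.
    + pose proof (log_weight_ge0 _ hr); nra.
    + intros i hi; now apply hA.
    + intros i hi; now apply Cmod_le_sqrt_jet_norm2.
  - pose proof (Cmod_le_sqrt_jet_norm2 (S j) z ltac:(lia)).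
    pose proof (growth_factor_ge1 _ hr); nra.
Qed.

(* Gronwall along the ray through [z]; [G] is an antiderivative of the rate [2 k growth_factor]. *)
Lemma jet_norm2_le z : inD z ->
  jet_norm2 z <= jet_norm2 C0 * exp (2 * INR k * (1 + INR k * a + INR k * M)).
Proof.
  intros hz; destruct (ray_Cmod z) as [w [hw hzw]]; set (r := Cmod z) in *.
  assert (hr : 0 <= r < 1) by (split; [apply Cmod_ge0 | exact hz]).
  pose proof (pos_INR k).
  set (G := fun t => 2 * INR k * ((1 + INR k * a) * t + INR k * M * ((1 - t) * ln (1 - t) + t))).
  assert (hG : G r - G 0 <= 2 * INR k * (1 + INR k * a + INR k * M)).
  { pose proof (log_weight_primitive_le r hr).
    assert (0 <= INR k * a) by now apply Rmult_le_pos.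
    assert (0 <= INR k * M) by now apply Rmult_le_pos.
    assert ((1 + INR k * a) * r <= 1 + INR k * a) by nra.
    assert (INR k * M * ((1 - r) * ln (1 - r) + r) <= INR k * M) by nra.
    unfold G; rewrite Rminus_0_r, ln_1; nra. }
  assert (hq : jet_norm2 (ray w r) <= jet_norm2 (ray w 0) * exp (G r - G 0)).
  { apply (gronwall_le (fun t => jet_norm2 (ray w t))
      (fun t => Rsum k (fun j => 2 * Cdot (F j (ray w t)) (Cmul (F (S j) (ray w t)) w)))
      G (fun t => 2 * INR k * growth_factor t)); [easy | | |].
    - intros t ht; unfold jet_norm2.
      apply (derivable_pt_lim_Rsum k (fun j s => Cmod (F j (ray w s)) ^ 2)
        (fun j s => 2 * Cdot (F j (ray w s)) (Cmul (F (S j) (ray w s)) w))).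
      intros j hj; apply (has_rderiv_Cmod_sqr (fun s => F j (ray w s))).
      apply has_cderiv_ray, hF, inD_ray; [easy | easy | lra].
    - intros t ht; apply is_derive_Reals; unfold G, growth_factor, log_weight.
      auto_derive; [lra|]; replace (1 + - t) with (1 - t) by ring; field; lra.
    - intros t ht; assert (ht' : 0 <= t < 1) by lra.
      assert (hzt := inD_ray w t hw ht').
      replace (2 * INR k * growth_factor t * jet_norm2 (ray w t))
        with (INR k * (2 * growth_factor t * jet_norm2 (ray w t))) by ring.
      apply Rsum_le_mul; intros j hj; set (Q := jet_norm2 (ray w t)).
      pose proof (Cmod_le_sqrt_jet_norm2 j (ray w t) hj) as hj0.
      pose proof (Cmod_deriv_le_jet_norm2 j (ray w t) hj hzt) as hj1.
      rewrite Cmod_ray, Rabs_pos_eq in hj1 by lra.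
      pose proof (Cdot_le_Cmod (F j (ray w t)) (Cmul (F (S j) (ray w t)) w)) as hdot.
      rewrite Cmod_Cmul, hw, Rmult_1_r in hdot.
      assert (Cmod (F j (ray w t)) * Cmod (F (S j) (ray w t))
              <= sqrt Q * (growth_factor t * sqrt Q))
        by (apply Rmult_le_compat; try apply Cmod_ge0; easy).
      assert (e : sqrt Q * (growth_factor t * sqrt Q) = growth_factor t * (sqrt Q * sqrt Q))
        by ring.
      rewrite sqrt_sqrt in e by apply jet_norm2_ge0.
      lra. }
  rewrite <- hzw, ray_0 in hq.
  pose proof (jet_norm2_ge0 C0).
  apply (Rle_trans _ _ _ hq), Rmult_le_compat_l, exp_le_exp; easy.
Qed.

Lemma solution_deriv_log_growth : (1 <= k)%nat ->
  exists C, 0 <= C /\ forall z, inD z -> Cmod (F 1 z) <= C * (1 + log_weight (Cmod z)).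
Proof.
  intros hk; pose proof (pos_INR k).
  set (B := sqrt (jet_norm2 C0 * exp (2 * INR k * (1 + INR k * a + INR k * M)))).
  assert (hB : 0 <= B) by apply sqrt_pos.
  exists ((1 + INR k * (a + M)) * B); split; [apply Rmult_le_pos; nra|].
  intros z hz; assert (hr : 0 <= Cmod z < 1) by (split; [apply Cmod_ge0 | exact hz]).
  pose proof (log_weight_ge0 _ hr); pose proof (growth_factor_ge1 _ hr).
  assert (sqrt (jet_norm2 z) <= B) by (apply sqrt_le_1_alt, jet_norm2_le, hz).
  assert (growth_factor (Cmod z) <= (1 + INR k * (a + M)) * (1 + log_weight (Cmod z))).
  { assert (0 <= INR k * a) by now apply Rmult_le_pos.
    assert (0 <= INR k * M) by now apply Rmult_le_pos.
    assert (0 <= INR k * a * log_weight (Cmod z)) by now apply Rmult_le_pos.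
    unfold growth_factor; nra. }
  apply (Rle_trans _ _ _ (Cmod_deriv_le_jet_norm2 0 z ltac:(lia) hz)).
  pose proof (sqrt_pos (jet_norm2 z)); nra.
Qed.

End Solution.

Theorem theorem3p5 (k : nat) (n0 : R) (A : nat -> Cplx -> Cplx)
  (hk : (1 <= k)%nat) (hn0 : 1 < n0)
  (hA : forall j, (j < k)%nat -> bloch (A j))
  (hAnz : exists j, (j < k)%nat /\ exists z, inD z /\ A j z <> C0)
  (hnu : exists nu, 0 <= nu < 1 /\
     forall theta, 0 <= theta < 2 * PI ->
       exists j, (j < k)%nat /\ A j (polar nu theta) <> C0) :
  forall (f : Cplx -> Cplx) (F : nat -> Cplx -> Cplx),
    (forall z, inD z -> F O z = f z) ->
    (forall j z, inD z -> has_cderiv (F j) z (F (S j) z)) ->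
    (forall z, inD z -> exists P : nat -> Cplx,
       (forall j, (j <= k)%nat -> is_rpow n0 (F j z) (P j)) /\
       Cadd (P k) (Csum k (fun j => Cmul (A j z) (P j))) = C0) ->
    forall s, 0 < s -> bloch_type s f.
Proof.
  intros f F hf hF hE s hs.
  destruct (bloch_family_growth k A hA) as [a [M [ha [hM hAgrowth]]]].
  destruct (solution_deriv_log_growth k n0 a M A F (Rlt_le _ _ hn0) ha hM hAgrowth hF hE hk)
    as [C [hC hF1]].
  apply (bloch_type_of_log_growth f (F 1%nat) C s hs hC); [|easy].
  intros z hz; apply (has_cderiv_eq_on_D f (F 0%nat)); [|easy | now apply hF].
  intros w hw; symmetry; now apply hf.
Qed.
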